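(* Let $N\in SUT$ be continuous, $k\ge1$, and let $\mathcal N_{[k]}:\mathcal I\to\mathbb R^{(k+1)l\times(k+1)l}$ be the block lower triangular matrix function with diagonal blocks $N$, subdiagonal blocks $I+M_{i+1,i}$ ($i=1,\dots,k$), blocks $M_{i,j}$ for $i\ge j+2$, and zero blocks above the diagonal, where all $M_{i,j}:\mathcal I\to\mathbb R^{l\times l}$ are continuous elements of $SUT$. Then there exist continuous $\tilde N_2,\dots,\tilde N_{k+1}\in SUT$, each having the same secondary diagonal blocks as $N$ (i.e. $(\tilde N_s)_{i,i+1}=N_{i,i+1}$), such that $\ker\mathcal N_{[k]}=\{(y_0,\dots,y_k)\in\mathbb R^{(k+1)l}: N\tilde N_2\cdots\tilde N_{k+1}y_k=0,\ y_i=(-1)^{k+1-i}\tilde N_{i+1}\cdots\tilde N_{k+1}y_k,\ i=0,\dots,k-1\}$, so that $\dim\ker\mathcal N_{[k]}=\dim\ker N\tilde N_2\cdots\tilde N_{k+1}$ and $\operatorname{rank}\mathcal N_{[k]}=kl+\operatorname{rank}N\tilde N_2\cdots\tilde N_{k+1}$. If moreover $N\in SUT_{column}$ or $N\in SUT_{row}$, then $\operatorname{rank}\mathcal N_{[k]}=kl+\operatorname{rank}N^{k+1}$, which is constant on $\mathcal I$.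
   Context: $SUT=SUT(l,\nu,l_1,\dots,l_\nu)$ ($\nu\ge2$, $l_i\ge1$, $l=\sum l_i$) denotes the set of matrix functions $N:\mathcal I\to\mathbb R^{l\times l}$ partitioned into blocks $N_{ij}$ of size $l_i\times l_j$ with $N_{ij}=0$ for $i\ge j$. $SUT_{column}$ (when $l_1\ge\dots\ge l_\nu$): $N\in SUT$ with $\operatorname{rank}N_{i,i+1}=l_{i+1}$ pointwise, $i=1,\dots,\nu-1$; $SUT_{row}$ (when $l_1\le\dots\le l_\nu$): $N\in SUT$ with $\operatorname{rank}N_{i,i+1}=l_i$ pointwise. *)

From HB Require Import structures.
From mathcomp Require Import all_boot all_order all_algebra.
From mathcomp Require Import all_classical all_reals all_analysis.
Set Implicit Arguments. Unset Strict Implicit. Unset Printing Implicit Defensive.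
Import Order.TTheory GRing.Theory Num.Theory.
Import numFieldNormedType.Exports.
Local Open Scope classical_set_scope.
Local Open Scope ring_scope.

Section Defs.
Variable R : realType.

(* The block structure: nu blocks of sizes p 0, ..., p (nu-1) (the paper's
   l_1, ..., l_nu); total size l = \sum_i p i. *)
Definition bsize (nu : nat) (p : 'I_nu -> nat) : nat := \sum_(i < nu) p i.

Definition mxcont (I : interval R) (m n : nat) (F : R -> 'M[R]_(m, n)) : Prop :=
  forall i j, {within [set` I], continuous (fun t => F t i j)}.

Definition SUT (I : interval R) (nu : nat) (p : 'I_nu -> nat)
    (F : R -> 'M[R]_(bsize p)) : Prop :=
  forall t, t \in I -> forall i j : 'I_nu, (j <= i)%N ->
    submxblock (F t) i j = 0.

Definition SUT_column (I : interval R) (nu : nat) (p : 'I_nu -> nat)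
    (F : R -> 'M[R]_(bsize p)) : Prop :=
  (forall i j : 'I_nu, (i <= j)%N -> (p j <= p i)%N) /\ SUT I F /\
  forall t, t \in I -> forall i j : 'I_nu, j = i.+1 :> nat ->
    \rank (submxblock (F t) i j) = p j.

Definition SUT_row (I : interval R) (nu : nat) (p : 'I_nu -> nat)
    (F : R -> 'M[R]_(bsize p)) : Prop :=
  (forall i j : 'I_nu, (i <= j)%N -> (p i <= p j)%N) /\ SUT I F /\
  forall t, t \in I -> forall i j : 'I_nu, j = i.+1 :> nat ->
    \rank (submxblock (F t) i j) = p i.

Definition bigNk (n k : nat) (N : 'M[R]_n) (M : nat -> nat -> 'M[R]_n)
    : 'M[R]_(\sum_(i < k.+1) n) :=
  \mxblock_(i < k.+1, j < k.+1)
    (if i == j :> nat then N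
     else if i == j.+1 :> nat then 1%:M + M i j
     else if (j.+2 <= i)%N then M i j
     else 0).

Definition mxprod (n : nat) (a b : nat) (A : nat -> 'M[R]_n) : 'M[R]_n :=
  \big[mulmx/1%:M]_(a <= s < b) A s.

Definition mxpow (n : nat) (A : 'M[R]_n) (e : nat) : 'M[R]_n :=
  iter e (mulmx A) 1%:M.

End Defs.

(* Solve [bigNk k N M *m y = 0] block row by block row. Row [0] reads
   [N y_0 = 0] and row [i+1] reads
   [N y_(i+1) + (1 + M_(i+1,i)) y_i + \sum_(j < i) M_(i+1,j) y_j = 0]. Once the
   earlier rows have expressed every [y_j], [j < i], through [y_i], row [i+1]
   becomes [N y_(i+1) + (1 + X_(i+1)) y_i = 0] with [X_(i+1)] block strictly upper
   triangular, hence nilpotent; so [y_i = - tN_(i+2) y_(i+1)] where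
   [tN_(i+2) = (1 + X_(i+1))^-1 N] is again block strictly upper triangular with
   the superdiagonal blocks of [N]. The kernel is thus parametrised by [y_k]
   subject to [N tN_2 ... tN_(k+1) y_k = 0], which gives the rank formula.
   If all superdiagonal blocks are injective (resp. surjective), a product of [m]
   such matrices vanishes below its [m]-th block superdiagonal and is injective
   (resp. surjective) on it, so its column (resp. row) kernel consists of the
   vectors vanishing on the last (resp. first) [nu - m] blocks. Its rank therefore
   does not depend on the factors: it is the rank of [N^(k+1)], for any [t]. *)

From HB Require Import structures.
From mathcomp Require Import all_boot all_order all_algebra.
From mathcomp Require Import all_classical all_reals all_analysis.
From mathcomp Require Import zify.
Import Order.TTheory GRing.Theory Num.Theory.
Import numFieldNormedType.Exports.
Local Open Scope ring_scope.
Set Implicit Arguments. Unset Strict Implicit. Unset Printing Implicit Defensive.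

Section BlockUpper.
Variables (R : pzRingType) (nu : nat) (p : 'I_nu -> nat).
Local Notation n := (bsize p).
Local Notation blk A i j := (@submxblock R nu nu p p A i j).

Definition upper_blk (d : nat) (A : 'M[R]_n) :=
  forall i j : 'I_nu, (j < i + d)%N -> blk A i j = 0.

Lemma submxblockM (A B : 'M[R]_n) i j :
  blk (A *m B) i j = \sum_l blk A i l *m blk B l j.
Proof.
by rewrite -{1}[A]submxblockK -{1}[B]submxblockK mul_mxblock mxblockK.
Qed.

Lemma submxblockZ (c : R) (A : 'M[R]_n) i j : blk (c *: A) i j = c *: blk A i j.
Proof. by apply/matrixP => r s; rewrite !mxE. Qed.

Lemma upper_blk0 d : upper_blk d 0.
Proof. by move=> i j _; rewrite submxblock0. Qed.

Lemma upper_blkD d A B : upper_blk d A -> upper_blk d B -> upper_blk d (A + B).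
Proof. by move=> hA hB i j lt; rewrite submxblockD hA ?hB ?addr0. Qed.

Lemma upper_blkN d A : upper_blk d A -> upper_blk d (- A).
Proof. by move=> hA i j lt; rewrite submxblockN hA ?oppr0. Qed.

Lemma upper_blkZ d c A : upper_blk d A -> upper_blk d (c *: A).
Proof. by move=> hA i j lt; rewrite submxblockZ hA ?scaler0. Qed.

Lemma upper_blk_sum d (J : finType) (P : pred J) (F : J -> 'M[R]_n) :
  (forall j, P j -> upper_blk d (F j)) -> upper_blk d (\sum_(j | P j) F j).
Proof.
move=> h; apply: (big_ind (upper_blk d)) => //.
  exact: upper_blk0.
exact: upper_blkD.
Qed.

Lemma upper_blkW d d' A : (d' <= d)%N -> upper_blk d A -> upper_blk d' A.
Proof. by move=> le hA i j lt; apply: hA; lia. Qed.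

Lemma upper_blkM a b A B :
  upper_blk a A -> upper_blk b B -> upper_blk (a + b) (A *m B).
Proof.
move=> hA hB i j lt; rewrite submxblockM big1 // => l _.
case: (ltnP l (i + a)) => h; first by rewrite hA // mul0mx.
by rewrite hB ?mulmx0 //; lia.
Qed.

Lemma upper_blk1 : upper_blk 0 1%:M.
Proof.
move=> i j lt; apply/matrixP => r s; rewrite !mxE.
case: eqP => // e; have := congr1 tagnat.sig1 e; rewrite !tagnat.Rank1K.
by move=> eij; move: lt; rewrite eij addn0 ltnn.
Qed.

Lemma upper_blkX X m : upper_blk 1 X -> upper_blk m (X ^+ m).
Proof.
move=> hX; elim: m => [|m IH]; first by rewrite expr0 -idmxE; exact: upper_blk1.
by rewrite exprS -mulmxE -add1n; apply: upper_blkM.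
Qed.

Lemma upper_blk_eq0 d A : (nu <= d)%N -> upper_blk d A -> A = 0.
Proof.
move=> le hA; apply/mxblockP => i j; rewrite submxblock0; apply: hA.
have := ltn_ord j; lia.
Qed.

(* [(1 + X)^-1] for block strictly upper triangular [X], which is nilpotent of
   index at most [nu]. *)
Definition unipinv (X : 'M[R]_n) : 'M[R]_n := \sum_(m < nu.+1) (- X) ^+ m.

Lemma unipinvK X : upper_blk 1 X ->
  (1 + X) * unipinv X = 1 /\ unipinv X * (1 + X) = 1.
Proof.
move=> hX.
have Xnil : (- X) ^+ nu.+1 = 0.
  by apply: (@upper_blk_eq0 nu.+1) => //; apply/upper_blkX/upper_blkN.
have geom := subrX1 (- X) nu.+1; rewrite Xnil sub0r in geom.
have comm : GRing.comm (- X) (unipinv X).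
  rewrite /GRing.comm /unipinv mulr_suml mulr_sumr; apply: eq_bigr => m _.
  by rewrite -exprS -exprSr.
have inv_r : (1 + X) * unipinv X = 1.
  by apply: oppr_inj; rewrite geom -mulNr opprD addrC.
split => //; rewrite -{2}inv_r mulrDr mulrDl mul1r mulr1; congr (_ + _).
by apply: oppr_inj; rewrite -mulrN -mulNr comm.
Qed.

Lemma upper_blk_unipinv_sub1 X : upper_blk 1 X -> upper_blk 1 (unipinv X - 1).
Proof.
move=> hX; rewrite /unipinv big_ord_recl /= expr0 [1 + _]addrC addrK.
apply: upper_blk_sum => m _; rewrite /bump leq0n add1n.
by apply: (@upper_blkW m.+1); [|apply/upper_blkX/upper_blkN].
Qed.

Lemma upper_blk_unipinv X : upper_blk 1 X -> upper_blk 0 (unipinv X).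
Proof.
move=> hX; rewrite -(subrK 1 (unipinv X)); apply: upper_blkD.
  exact: upper_blkW (upper_blk_unipinv_sub1 hX).
by rewrite -idmxE; exact: upper_blk1.
Qed.

Lemma submxblock_unipinvMl X N (i j : 'I_nu) :
  upper_blk 1 X -> upper_blk 1 N -> j = i.+1 :> nat ->
  blk (unipinv X *m N) i j = blk N i j.
Proof.
move=> hX hN e; rewrite -{1}(subrK 1 (unipinv X)) mulmxDl -idmxE mul1mx.
by rewrite submxblockD (upper_blkM (upper_blk_unipinv_sub1 hX) hN) ?add0r //; lia.
Qed.

End BlockUpper.

Section OrderedProduct.
Variables (R : realType) (n : nat).

Lemma mxprodE a b (Q : nat -> 'M[R]_n) : mxprod a b Q = \prod_(a <= s < b) Q s.
Proof. by []. Qed.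

Lemma mxprod_nil a (Q : nat -> 'M[R]_n) : mxprod a a Q = 1%:M.
Proof. by rewrite mxprodE big_geq // idmxE. Qed.

Lemma mxprod_recr a b (Q : nat -> 'M[R]_n) :
  (a <= b)%N -> mxprod a b.+1 Q = mxprod a b Q *m Q b.
Proof. by move=> le; rewrite !mxprodE big_nat_recr //= mulmxE. Qed.

Lemma eq_mxprod a b (Q Q' : nat -> 'M[R]_n) :
  (forall s, (a <= s < b)%N -> Q s = Q' s) -> mxprod a b Q = mxprod a b Q'.
Proof. exact: eq_big_nat. Qed.

End OrderedProduct.

Section MatrixContinuity.
Variables (R : realType) (I : interval R).
Let cont (f : R -> R) := {within [set` I], continuous f}%classic.

Lemma cont_sum (J : Type) (s : seq J) (P : pred J) (f : J -> R -> R) :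
  (forall j, cont (f j)) -> cont (fun t => \sum_(j <- s | P j) f j t).
Proof.
move=> h; elim: s => [|a s IH].
  by under eq_fun do rewrite big_nil; move=> x; exact: cvg_cst.
under eq_fun do rewrite big_cons.
by case: (P a) => // x; apply: cvgD; [exact: h | exact: IH].
Qed.

Lemma mxcont_entries m1 m2 (F : R -> 'M[R]_(m1, m2)) :
  (forall i j, cont (fun t => F t i j)) -> mxcont I F.
Proof. by []. Qed.

Lemma mxcont_cst m1 m2 (A : 'M[R]_(m1, m2)) : mxcont I (fun _ => A).
Proof. by move=> i j x; exact: cvg_cst. Qed.

Lemma mxcontD m1 m2 (F G : R -> 'M[R]_(m1, m2)) :
  mxcont I F -> mxcont I G -> mxcont I (fun t => F t + G t).
Proof.
move=> hF hG; apply: mxcont_entries => i j; under eq_fun do rewrite mxE.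
by move=> x; apply: cvgD; [exact: hF | exact: hG].
Qed.

Lemma mxcontN m1 m2 (F : R -> 'M[R]_(m1, m2)) :
  mxcont I F -> mxcont I (fun t => - F t).
Proof.
move=> hF; apply: mxcont_entries => i j; under eq_fun do rewrite mxE.
by move=> x; apply: cvgN; exact: hF.
Qed.

Lemma mxcontZ m1 m2 c (F : R -> 'M[R]_(m1, m2)) :
  mxcont I F -> mxcont I (fun t => c *: F t).
Proof.
move=> hF; apply: mxcont_entries => i j; under eq_fun do rewrite mxE.
by move=> x; apply: cvgM; [exact: cvg_cst | exact: hF].
Qed.

Lemma mxcontM m1 m2 m3 (F : R -> 'M[R]_(m1, m2)) (G : R -> 'M[R]_(m2, m3)) :
  mxcont I F -> mxcont I G -> mxcont I (fun t => F t *m G t).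
Proof.
move=> hF hG; apply: mxcont_entries => i j; under eq_fun do rewrite mxE.
by apply: cont_sum => l x; apply: cvgM; [exact: hF | exact: hG].
Qed.

Lemma mxcont_sum m1 m2 (J : Type) (s : seq J) (P : pred J)
    (F : J -> R -> 'M[R]_(m1, m2)) :
  (forall j, mxcont I (F j)) -> mxcont I (fun t => \sum_(j <- s | P j) F j t).
Proof.
move=> h; apply: mxcont_entries => i j; under eq_fun do rewrite summxE.
by apply: cont_sum => l; exact: h.
Qed.

Lemma mxcont_prod m (J : Type) (s : seq J) (F : J -> R -> 'M[R]_m) :
  (forall j, mxcont I (F j)) ->
  mxcont I (fun t => \big[mulmx/1%:M]_(j <- s) F j t).
Proof.
move=> h; elim: s => [|a s IH].
  by under eq_fun do rewrite big_nil; exact: mxcont_cst.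
by under eq_fun do rewrite big_cons; exact: mxcontM.
Qed.

Lemma mxcontX m (F : R -> 'M[R]_m) e :
  mxcont I F -> mxcont I (fun t => F t ^+ e).
Proof.
move=> h; elim: e => [|e IH].
  by under eq_fun do rewrite expr0; exact: mxcont_cst.
by under eq_fun do rewrite exprS -mulmxE; exact: mxcontM.
Qed.

End MatrixContinuity.

Section ColumnKernel.
Variable F : fieldType.

Lemma sub_kermx_trP m1 m2 (A : 'M[F]_(m1, m2)) (u : 'rV[F]_m2) :
  reflect (A *m u^T = 0) (u <= kermx A^T)%MS.
Proof.
by apply: (iffP sub_kermxP) => h; have := congr1 trmx h; rewrite trmx_mul trmxK trmx0.
Qed.

Lemma corank_eq_retract r1 r2 m1 m2 (A : 'M[F]_(r1, m1)) (B : 'M[F]_(r2, m2))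
    (T : 'M[F]_(m1, m2)) (S : 'M[F]_(m2, m1)) :
  S *m T = 1%:M ->
  (forall y : 'cV_m1, A *m y = 0 -> y = T *m (S *m y) /\ B *m (S *m y) = 0) ->
  (forall z : 'cV_m2, B *m z = 0 -> A *m (T *m z) = 0) ->
  (m1 - \rank A = m2 - \rank B)%N.
Proof.
move=> ST kerA kerB; rewrite -(mxrank_tr A) -(mxrank_tr B) -!mxrank_ker.
apply/eqP; rewrite eqn_leq; apply/andP; split.
- apply: leq_trans (mxrankS _) (mxrankM_maxl _ T^T); apply/row_subP => i.
  have [yE By] := kerA _ (sub_kermx_trP _ _ (row_sub i (kermx A^T))).
  rewrite {1}(_ : row i _ = (S *m (row i (kermx A^T))^T)^T *m T^T); last first.
    by rewrite -trmx_mul -yE trmxK.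
  by apply/submxMr/sub_kermx_trP; rewrite trmxK.
- apply: leq_trans (mxrankS _) (mxrankM_maxl _ S^T); apply/row_subP => i.
  have Az := kerB _ (sub_kermx_trP _ _ (row_sub i (kermx B^T))).
  rewrite {1}(_ : row i _ = (T *m (row i (kermx B^T))^T)^T *m S^T); last first.
    by rewrite -trmx_mul mulmxA ST mul1mx trmxK.
  by apply/submxMr/sub_kermx_trP; rewrite trmxK.
Qed.

Lemma rank_eq_colker r1 r2 m (A : 'M[F]_(r1, m)) (B : 'M[F]_(r2, m)) :
  (forall x : 'cV_m, A *m x = 0 <-> B *m x = 0) -> \rank A = \rank B.
Proof.
move=> AB; have := @corank_eq_retract _ _ _ _ A B 1%:M 1%:M (mul1mx _).
have kerA (y : 'cV_m) : A *m y = 0 -> y = 1%:M *m (1%:M *m y) /\ B *m (1%:M *m y) = 0.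
  by rewrite !mul1mx => /AB.
have kerB (z : 'cV_m) : B *m z = 0 -> A *m (1%:M *m z) = 0 by rewrite mul1mx => /AB.
move=> /(_ kerA kerB); have := rank_leq_col A; have := rank_leq_col B; lia.
Qed.

Lemma rank_eq_rowker m c1 c2 (A : 'M[F]_(m, c1)) (B : 'M[F]_(m, c2)) :
  (forall u : 'rV_m, u *m A = 0 <-> u *m B = 0) -> \rank A = \rank B.
Proof.
move=> AB; rewrite -(mxrank_tr A) -(mxrank_tr B); apply: rank_eq_colker => x.
have trE c (C : 'M[F]_(m, c)) : C^T *m x = 0 <-> x^T *m C = 0.
  by split => e; have := congr1 trmx e; rewrite trmx_mul ?trmxK trmx0.
by rewrite !trE.
Qed.

End ColumnKernel.

Section SuperdiagonalInjectivity.
Variables (F : fieldType) (nu : nat) (p : 'I_nu -> nat).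
Local Notation n := (bsize p).
Local Notation blk A i j := (@submxblock F nu nu p p A i j).

Definition colinj_blk m (A : 'M[F]_n) := forall i j : 'I_nu, j = (i + m)%N :> nat ->
  forall x : 'cV[F]_(p j), blk A i j *m x = 0 -> x = 0.

Definition rowinj_blk m (A : 'M[F]_n) := forall i j : 'I_nu, j = (i + m)%N :> nat ->
  forall u : 'rV[F]_(p i), u *m blk A i j = 0 -> u = 0.

Lemma submxblockM_upper a b (A B : 'M[F]_n) (i l j : 'I_nu) :
  upper_blk a A -> upper_blk b B -> l = (i + a)%N :> nat -> j = (l + b)%N :> nat ->
  blk (A *m B) i j = blk A i l *m blk B l j.
Proof.
move=> hA hB el ej; rewrite submxblockM (bigD1 l) //= big1 ?addr0 // => l' ne.
have ne' : nat_of_ord l' != nat_of_ord l by [].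
case: (ltnP l' (i + a)) => h; first by rewrite hA // mul0mx.
by rewrite hB ?mulmx0 //; move/eqP: ne'; lia.
Qed.

Lemma colinj_blkM a b (A B : 'M[F]_n) : upper_blk a A -> upper_blk b B ->
  colinj_blk a A -> colinj_blk b B -> colinj_blk (a + b) (A *m B).
Proof.
move=> hA hB cA cB i j e x.
have lt : (i + a < nu)%N by have := ltn_ord j; lia.
rewrite (submxblockM_upper (l := Ordinal lt) hA hB) //=; last lia.
rewrite -mulmxA => h; apply: (cB (Ordinal lt)) => //=; first lia.
exact: (cA i (Ordinal lt)).
Qed.

Lemma rowinj_blkM a b (A B : 'M[F]_n) : upper_blk a A -> upper_blk b B ->
  rowinj_blk a A -> rowinj_blk b B -> rowinj_blk (a + b) (A *m B).
Proof.
move=> hA hB cA cB i j e u.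
have lt : (i + a < nu)%N by have := ltn_ord j; lia.
rewrite (submxblockM_upper (l := Ordinal lt) hA hB) //=; last lia.
rewrite mulmxA => h; apply: (cA i (Ordinal lt)) => //=.
by apply: (cB (Ordinal lt) j) => //=; lia.
Qed.

Lemma colinj_blk1 (A : 'M[F]_n) :
  (forall i j : 'I_nu, j = i.+1 :> nat -> \rank (blk A i j) = p j) -> colinj_blk 1 A.
Proof.
move=> rkA i j e x Ax.
have free : row_free (blk A i j)^T.
  by rewrite /row_free mxrank_tr rkA ?eqxx // e addn1.
have : x^T *m (blk A i j)^T == 0 by rewrite -trmx_mul Ax trmx0.
by rewrite mulmx_free_eq0 // => /eqP/(congr1 trmx); rewrite trmxK trmx0.
Qed.

Lemma rowinj_blk1 (A : 'M[F]_n) :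
  (forall i j : 'I_nu, j = i.+1 :> nat -> \rank (blk A i j) = p i) -> rowinj_blk 1 A.
Proof.
move=> rkA i j e u uA.
have free : row_free (blk A i j) by rewrite /row_free rkA ?eqxx // e addn1.
by apply/eqP; rewrite -(mulmx_free_eq0 _ free) uA.
Qed.

Lemma submxcolM (A : 'M[F]_n) (x : 'cV[F]_n) i :
  submxcol (A *m x) i = \sum_j blk A i j *m submxcol x j.
Proof.
by rewrite -{1}[A]submxblockK -{1}[x]submxcolK mul_mxblock_mxrow mxcolK.
Qed.

Lemma submxrowM (A : 'M[F]_n) (u : 'rV[F]_n) j :
  submxrow (u *m A) j = \sum_i submxrow u i *m blk A i j.
Proof.
by rewrite -{1}[A]submxblockK -{1}[u]submxrowK mul_mxrow_mxblock mxrowK.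
Qed.

Lemma colker_upper m (A : 'M[F]_n) : upper_blk m A -> colinj_blk m A ->
  forall x : 'cV[F]_n,
    A *m x = 0 <-> forall j : 'I_nu, (m <= j)%N -> submxcol x j = 0.
Proof.
move=> hA cA x; split => [Ax|xE]; last first.
  apply/mxcolP => i; rewrite submxcolM submxcol0 big1 // => j _.
  case: (ltnP j (i + m)) => hj; first by rewrite hA // mul0mx.
  by rewrite xE ?mulmx0 //; lia.
(* Downward induction on [j]: block [j - m] of [A *m x] only involves the
   blocks [x_j, x_(j+1), ...]. *)
suff xE d (j : 'I_nu) : (m <= j)%N -> (nu <= j + d)%N -> submxcol x j = 0.
  by move=> j hj; apply: (xE nu j hj); rewrite leq_addl.
elim: d j => [|d IH] j hj hd; first by have := ltn_ord j; lia.
have lt : (j - m < nu)%N by have := ltn_ord j; lia.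
have := congr1 (fun z => submxcol z (Ordinal lt)) Ax.
rewrite submxcolM submxcol0 (bigD1 j) //= big1 ?addr0.
  by apply: (cA (Ordinal lt) j) => /=; lia.
move=> j' ne; have ne' : nat_of_ord j' != nat_of_ord j by [].
case: (ltnP j' j) => hj'; first by rewrite hA ?mul0mx //=; lia.
by rewrite IH ?mulmx0 //; move/eqP: ne'; lia.
Qed.

Lemma rowker_upper m (A : 'M[F]_n) : upper_blk m A -> rowinj_blk m A ->
  forall u : 'rV[F]_n,
    u *m A = 0 <-> forall i : 'I_nu, (i + m < nu)%N -> submxrow u i = 0.
Proof.
move=> hA cA u; split => [uA|uE]; last first.
  apply/mxrowP => j; rewrite submxrowM submxrow0 big1 // => i _.
  case: (ltnP j (i + m)) => hj; first by rewrite hA // mulmx0.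
  by rewrite uE ?mul0mx //; have := ltn_ord j; lia.
suff uE d (i : 'I_nu) : (i < d)%N -> (i + m < nu)%N -> submxrow u i = 0.
  by move=> i hi; apply: (uE nu).
elim: d i => [|d IH] i hi hd; first lia.
have := congr1 (fun z => submxrow z (Ordinal hd)) uA.
rewrite submxrowM submxrow0 (bigD1 i) //= big1 ?addr0.
  by apply: (cA i (Ordinal hd)).
move=> i' ne; have ne' : nat_of_ord i' != nat_of_ord i by [].
case: (ltnP i' i) => hi'; first by rewrite IH ?mul0mx //; lia.
by rewrite hA ?mulmx0 //=; move/eqP: ne'; lia.
Qed.

Lemma rank_eq_colinj_blk m (A B : 'M[F]_n) :
  upper_blk m A -> colinj_blk m A -> upper_blk m B -> colinj_blk m B ->
  \rank A = \rank B.
Proof.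
move=> hA cA hB cB; apply: rank_eq_colker => x.
by rewrite (colker_upper hA cA) (colker_upper hB cB).
Qed.

Lemma rank_eq_rowinj_blk m (A B : 'M[F]_n) :
  upper_blk m A -> rowinj_blk m A -> upper_blk m B -> rowinj_blk m B ->
  \rank A = \rank B.
Proof.
move=> hA rA hB rB; apply: rank_eq_rowker => u.
by rewrite (rowker_upper hA rA) (rowker_upper hB rB).
Qed.

End SuperdiagonalInjectivity.

Section GradedProducts.
Variables (R : realType) (nu : nat) (p : 'I_nu -> nat).
Local Notation n := (bsize p).
(* [graded] will be [colinj_blk] or [rowinj_blk]. *)
Variable graded : nat -> 'M[R]_n -> Prop.
Hypothesis gradedM : forall a b (A B : 'M[R]_n), upper_blk a A -> upper_blk b B ->
  graded a A -> graded b B -> graded (a + b) (A *m B).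
Hypothesis graded_rank : forall m (A B : 'M[R]_n),
  upper_blk m A -> graded m A -> upper_blk m B -> graded m B -> \rank A = \rank B.

Lemma graded_mul_mxprod (N : 'M[R]_n) (Q : nat -> 'M[R]_n) e :
  upper_blk 1 N -> graded 1 N ->
  (forall s, (2 <= s < e.+2)%N -> upper_blk 1 (Q s) /\ graded 1 (Q s)) ->
  upper_blk e.+1 (N *m mxprod 2 e.+2 Q) /\ graded e.+1 (N *m mxprod 2 e.+2 Q).
Proof.
move=> hN gN; elim: e => [|e IH] hQ; first by rewrite mxprod_nil mulmx1.
have [hP gP] := IH (fun s hs => hQ s (ltac:(lia))).
have [hQe gQe] := hQ e.+2 (ltac:(lia)).
rewrite mxprod_recr // mulmxA.
have := upper_blkM hP hQe; have := gradedM hP hQe gP gQe; rewrite addn1.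
by split.
Qed.

Lemma graded_mxpow (N : 'M[R]_n) e : upper_blk 1 N -> graded 1 N ->
  upper_blk e.+1 (mxpow N e.+1) /\ graded e.+1 (mxpow N e.+1).
Proof.
move=> hN gN; elim: e => [|e [hP gP]]; first by rewrite /mxpow /= mulmx1.
rewrite /mxpow iterS -/(mxpow N e.+1).
have := upper_blkM hN hP; have := gradedM hN hP gN gP; rewrite add1n.
by split.
Qed.

Lemma rank_mul_mxprod_mxpow (N N' : 'M[R]_n) (Q : nat -> 'M[R]_n) e :
  upper_blk 1 N -> graded 1 N -> upper_blk 1 N' -> graded 1 N' ->
  (forall s, (2 <= s < e.+2)%N -> upper_blk 1 (Q s) /\ graded 1 (Q s)) ->
  \rank (N *m mxprod 2 e.+2 Q) = \rank (mxpow N' e.+1).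
Proof.
move=> hN gN hN' gN' hQ.
have [hP gP] := graded_mul_mxprod hN gN hQ.
have [hX gX] := graded_mxpow e hN' gN'.
exact: graded_rank hP gP hX gX.
Qed.

End GradedProducts.

Section Reduction.
Variables (R : realType) (nu : nat) (p : 'I_nu -> nat).
Local Notation n := (bsize p).
Local Notation blk A i j := (@submxblock R nu nu p p A i j).
Variables (N : 'M[R]_n) (M : nat -> nat -> 'M[R]_n).

(* [1 + subdiag_corr Q i] is the coefficient of [y_(i-1)] in block row [i] of
   [bigNk k N M] once every [y_j], [j < i - 1], has been replaced by
   [(-1)^(i-1-j) Q_(j+2) ... Q_i y_(i-1)]. *)
Definition subdiag_corr (Q : nat -> 'M[R]_n) (i : nat) : 'M[R]_n :=
  M i i.-1 + \sum_(j < i.-1) (-1) ^+ (i.-1 - j) *: (M i j *m mxprod j.+2 i.+1 Q).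

(* [tNs i s] is the paper's [\tilde N_s] when [2 <= s <= i.+1], and [0] for
   the other [s]. *)
Fixpoint tNs (i : nat) : nat -> 'M[R]_n :=
  if i is i'.+1 then
    fun s => if s == i'.+2 then unipinv (p := p) (subdiag_corr (tNs i') i'.+1) *m N
             else tNs i' s
  else fun=> 0.

Lemma tNs_stable i i' s : (i <= i')%N -> (s <= i.+1)%N -> tNs i' s = tNs i s.
Proof.
move=> le hs; elim: i' le => [|i' IH] le; first by have -> : i = 0%N by lia.
case: (ltnP i i'.+1) => h; last by have -> : i = i'.+1 by lia.
by rewrite /=; case: eqP => [e|_]; [lia | apply: IH; lia].
Qed.

Lemma tNsE k i : (i < k)%N ->
  tNs k i.+2 = unipinv (p := p) (subdiag_corr (tNs k) i.+1) *m N.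
Proof.
move=> lt; rewrite (@tNs_stable i.+1) //= eqxx; congr (unipinv _ *m _).
rewrite /subdiag_corr; congr (_ + _); apply: eq_bigr => j _; congr (_ *: (_ *m _)).
by apply: eq_mxprod => s hs; rewrite (@tNs_stable i) //; lia.
Qed.

Lemma upper_blk_mxprod a b (Q : nat -> 'M[R]_n) :
  (forall s, upper_blk 0 (Q s)) -> upper_blk 0 (mxprod a b Q).
Proof.
move=> hQ; rewrite /mxprod; elim: (index_iota a b) => [|s r IH].
  by rewrite big_nil; exact: upper_blk1.
by rewrite big_cons; exact: (upper_blkM (hQ s) IH).
Qed.

Variable k : nat.
Hypothesis N_upper : upper_blk 1 N.
Hypothesis M_upper : forall i j, (j < i <= k)%N -> upper_blk 1 (M i j).
Local Notation tN := (tNs k).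

Lemma upper_blk_subdiag_corr (Q : nat -> 'M[R]_n) i : (0 < i <= k)%N ->
  (forall s, upper_blk 1 (Q s)) -> upper_blk 1 (subdiag_corr Q i).
Proof.
move=> hi hQ; apply: upper_blkD; first by apply: M_upper; lia.
apply: upper_blk_sum => j _; apply/upper_blkZ; rewrite -[1%N]addn0.
apply: upper_blkM; first by apply: M_upper; have := ltn_ord j; lia.
by apply: upper_blk_mxprod => s; exact: upper_blkW (hQ s).
Qed.

Lemma upper_blk_tNs i s : (i <= k)%N -> upper_blk 1 (tNs i s).
Proof.
elim: i s => [|i IH] s le /=; first exact: upper_blk0.
case: eqP => _; last by apply: IH; lia.
rewrite -[1%N]add0n; apply: upper_blkM N_upper; apply: upper_blk_unipinv.
by apply: upper_blk_subdiag_corr; [lia | move=> s'; apply: IH; lia].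
Qed.

Lemma submxblock_tNs i s (i1 j1 : 'I_nu) : (i <= k)%N -> (2 <= s <= i.+1)%N ->
  j1 = i1.+1 :> nat -> blk (tNs i s) i1 j1 = blk N i1 j1.
Proof.
elim: i s => [|i IH] s le hs e /=; first lia.
case: eqP => es; last by apply: IH => //; lia.
apply: submxblock_unipinvMl => //; apply: upper_blk_subdiag_corr; first lia.
by move=> s'; apply: upper_blk_tNs; lia.
Qed.

Definition bigNk_row (Y : nat -> 'cV[R]_n) (i : nat) : 'cV[R]_n :=
  N *m Y i + (if i is i'.+1 then Y i' else 0) + \sum_(j < i) M i j *m Y j.

Definition back_subst (Y : nat -> 'cV[R]_n) (i : nat) := forall j, (j < i)%N ->
  Y j = (-1) ^+ (i - j) *: (mxprod j.+2 i.+2 tN *m Y i).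

Section BackSubstitution.
Variable Y : nat -> 'cV[R]_n.

Lemma bigNk_rowS i : back_subst Y i ->
  bigNk_row Y i.+1 = N *m Y i.+1 + (1%:M + subdiag_corr tN i.+1) *m Y i.
Proof.
move=> bsY; rewrite /bigNk_row big_ord_recr /= mulmxDl mul1mx -!addrA; congr (_ + _).
rewrite /subdiag_corr /= mulmxDl mulmx_suml; congr (_ + _).
rewrite addrC; congr (_ + _); apply: eq_bigr => j _.
by rewrite (bsY j (ltn_ord j)) -scalemxAl -scalemxAr mulmxA.
Qed.

Lemma bigNk_rowS_eq0P i : (i < k)%N -> back_subst Y i ->
  bigNk_row Y i.+1 = 0 <-> Y i = - (tN i.+2 *m Y i.+1).
Proof.
move=> lt bsY; rewrite bigNk_rowS // tNsE //.
set X := subdiag_corr tN i.+1.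
have hX : upper_blk 1 X.
  by apply: upper_blk_subdiag_corr; [lia | move=> s; exact: upper_blk_tNs].
have [invr invl] := unipinvK hX; rewrite -!mulmxE -idmxE in invr invl.
split => [row0 | ->]; last by rewrite mulmxN !mulmxA invr mul1mx subrr.
have XY : (1%:M + X) *m Y i = - (N *m Y i.+1).
  by apply/eqP; rewrite -addr_eq0 addrC row0.
by rewrite -[Y i]mul1mx -invl -mulmxA XY mulmxN mulmxA.
Qed.

Lemma back_substS i : (i < k)%N ->
  back_subst Y i.+1 <-> back_subst Y i /\ Y i = - (tN i.+2 *m Y i.+1).
Proof.
move=> lt.
have tN1 : mxprod i.+2 i.+3 tN = tN i.+2 by rewrite mxprod_recr // mxprod_nil mul1mx.
have shift j : (j < i)%N ->
    (-1) ^+ (i - j) *: (mxprod j.+2 i.+2 tN *m - (tN i.+2 *m Y i.+1)) =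
    (-1) ^+ (i.+1 - j) *: (mxprod j.+2 i.+3 tN *m Y i.+1).
  move=> hj; rewrite (@mxprod_recr _ _ j.+2 i.+2) ?subSn; try lia.
  by rewrite exprS mulN1r scaleNr -scalerN mulmxN mulmxA.
have Yi : back_subst Y i.+1 -> Y i = - (tN i.+2 *m Y i.+1).
  by move/(_ i (ltnSn i)); rewrite subSn // subnn expr1 scaleN1r tN1.
split => [bsY | [bsY Yi']].
  split; last exact: Yi.
  by move=> j hj; rewrite (Yi bsY) shift // -bsY //; lia.
move=> j; rewrite ltnS leq_eqVlt => /predU1P[-> | hj].
  by rewrite subSn // subnn expr1 scaleN1r tN1.
by rewrite bsY // Yi' shift.
Qed.

Lemma bigNk_rows_eq0P i : (i <= k)%N ->
  (forall i', (1 <= i' <= i)%N -> bigNk_row Y i' = 0) <-> back_subst Y i.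
Proof.
elim: i => [|i IH] le; first by split => [_ j | _ i']; lia.
have {}IH := IH (ltnW le).
rewrite back_substS //; split => [rows0 | [bsY Yi] i' hi'].
  have bsY : back_subst Y i by apply/IH => i' hi'; apply: rows0; lia.
  by split => //; apply/bigNk_rowS_eq0P => //; apply: rows0; lia.
case: (ltnP i' i.+1) => h; first by apply: (proj2 IH bsY); lia.
have -> : i' = i.+1 by lia.
by apply/bigNk_rowS_eq0P.
Qed.

End BackSubstitution.

Hypothesis k_gt0 : (0 < k)%N.
Local Notation NN := (bigNk k N M).
Local Notation blkcol y j := (submxcol y (@inord k j)).

Lemma bigNk_entry_mul (i j : nat) (w : 'cV[R]_n) :
  (if i == j then N else if i == j.+1 then 1%:M + M i j
   else if (j.+2 <= i)%N then M i j else 0) *m w =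
  (if i == j then N *m w else 0) + (if i == j.+1 then w else 0) +
  (if (j < i)%N then M i j *m w else 0).
Proof.
case: (ltngtP i j) => h.
- have -> : (i == j.+1) = false by apply/eqP; lia.
  have -> : (j.+2 <= i)%N = false by lia.
  by rewrite mul0mx !addr0.
- case: eqP => e; first by rewrite mulmxDl mul1mx add0r.
  have -> : (j.+2 <= i)%N = true by lia.
  by rewrite !add0r.
- rewrite h; have -> : (j == j.+1) = false by apply/eqP; lia.
  by rewrite !addr0.
Qed.

Lemma mulmx_bigNk_eq0P (y : 'cV[R]_(\sum_(i < k.+1) n)) :
  NN *m y = 0 <-> forall i : 'I_k.+1, bigNk_row (fun j => blkcol y j) i = 0.
Proof.
have blkcolE (i : 'I_k.+1) : blkcol y i = submxcol y i by rewrite inord_val.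
suff -> : NN *m y = \mxcol_(i < k.+1) bigNk_row (fun j => blkcol y j) i.
  split => [NNy i | rows0]; last by apply/mxcolP => i; rewrite mxcolK submxcol0.
  by have := congr1 (fun z => submxcol z i) NNy; rewrite mxcolK submxcol0.
rewrite /bigNk -{1}[y]submxcolK mul_mxblock_mxrow; apply: eq_mxcol => i.
under eq_bigr do rewrite bigNk_entry_mul.
rewrite !big_split /=; congr (_ + _ + _).
- rewrite (bigD1 i) //= eqxx big1 ?addr0 ?blkcolE // => j ne.
  by case: eqP => // e; case/eqP: ne; apply: val_inj.
- case eqi: (nat_of_ord i) => [|i']; first by rewrite big1.
  have lt : (i' < k.+1)%N by have := ltn_ord i; lia.
  rewrite (bigD1 (@inord k i')) //= inordK // eqxx big1 ?addr0 // => j ne.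
  case: eqP => // e; case/eqP: ne; apply: val_inj.
  by rewrite /= inordK //; lia.
- rewrite (big_ord_widen k.+1 (fun j => M i j *m blkcol y j)); last first.
    by have := ltn_ord i; lia.
  by rewrite [RHS]big_mkcond /=; apply: eq_bigr => j _; rewrite blkcolE.
Qed.

Lemma bigNk_kerP (y : 'cV[R]_(\sum_(i < k.+1) n)) :
  NN *m y = 0 <->
  (N *m mxprod 2 k.+2 tN *m submxcol y ord_max = 0 /\
   forall i : 'I_k.+1, (i < k)%N ->
     submxcol y i = (-1) ^+ (k - i) *: (mxprod i.+2 k.+2 tN *m submxcol y ord_max)).
Proof.
set Y := fun j => blkcol y j.
have Yk : Y k = submxcol y ord_max by congr submxcol; apply: val_inj; rewrite /= inordK.
have YE (i : 'I_k.+1) : Y i = submxcol y i by rewrite /Y inord_val.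
have rows := bigNk_rows_eq0P Y (leqnn k).
have row0E : bigNk_row Y 0 = N *m Y 0 by rewrite /bigNk_row big_ord0 !addr0.
rewrite mulmx_bigNk_eq0P; split => [rows0 | [NPy yE]].
- have bsY : back_subst Y k.
    by apply/rows => i' hi'; have := rows0 (inord i'); rewrite inordK //; lia.
  split; last by move=> i hi; rewrite -YE -Yk; apply: bsY.
  move: (rows0 ord0); rewrite row0E (bsY 0%N) // Yk -scalemxAr mulmxA.
  by move/eqP; rewrite scaler_eq0 signr_eq0 => /eqP.
- have bsY : back_subst Y k.
    move=> j hj; rewrite Yk /Y; have := yE (inord j).
    by rewrite inordK; [apply | lia].
  move=> i; case: (posnP i) => [i0 | ipos].
    by rewrite i0 row0E (bsY 0%N) // Yk -scalemxAr mulmxA NPy scaler0.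
  by apply: (proj2 rows bsY); have := ltn_ord i; lia.
Qed.

(* [y |-> y_k] and [z |-> ((-1)^(k-j) tN_(j+2) ... tN_(k+1) z)_j] are mutually
   inverse bijections between the kernels of [NN] and of [N tN_2 ... tN_(k+1)]. *)
Lemma bigNk_corank :
  ((\sum_(i < k.+1) n) - \rank NN = n - \rank (N *m mxprod 2 k.+2 tN))%N.
Proof.
pose C (j : 'I_k.+1) := (-1) ^+ (k - j) *: mxprod j.+2 k.+2 tN.
pose T := \mxcol_j C j.
pose S : 'M[R]_(n, \sum_(i < k.+1) n) := \mxrow_j (if j == ord_max then 1%:M else 0).
have Cmax : C ord_max = 1%:M by rewrite /C /= subnn expr0 scale1r mxprod_nil.
have sumE m (D : 'I_k.+1 -> 'M[R]_(n, m)) :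
    \sum_j (if j == ord_max then 1%:M else 0) *m D j = D ord_max.
  rewrite (bigD1 ord_max) //= eqxx mul1mx big1 ?addr0 // => j /negbTE ->.
  exact: mul0mx.
have Sy y : S *m y = submxcol y ord_max.
  by rewrite -{1}[y]submxcolK mul_mxrow_mxcol sumE.
have Tz z j : submxcol (T *m z) j = C j *m z by rewrite -submxcol_mul mxcolK.
apply: (@corank_eq_retract _ _ _ _ _ NN _ T S).
- by rewrite mul_mxrow_mxcol sumE Cmax.
- move=> y /bigNk_kerP [NPy yE]; rewrite Sy; split => //.
  apply/mxcolP => j; rewrite Tz; case: (ltnP j k) => hj.
    by rewrite (yE j hj) /C scalemxAl.
  have -> : j = ord_max by apply: val_inj => /=; have := ltn_ord j; lia.
  by rewrite Cmax mul1mx.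
- move=> z Nz; apply/bigNk_kerP; rewrite !Tz Cmax mul1mx; split => // i hi.
  by rewrite Tz /C scalemxAl.
Qed.

Lemma rank_bigNk : \rank NN = (k * n + \rank (N *m mxprod 2 k.+2 tN))%N.
Proof.
have := bigNk_corank; have := rank_leq_col NN.
have := rank_leq_col (N *m mxprod 2 k.+2 tN).
move: (\rank NN) (\rank _) => r1 r2.
by rewrite big_const_ord iter_addn_0 mulnC; lia.
Qed.

Definition super_colfull (A : 'M[R]_n) :=
  forall i j : 'I_nu, j = i.+1 :> nat -> \rank (blk A i j) = p j.

Definition super_rowfull (A : 'M[R]_n) :=
  forall i j : 'I_nu, j = i.+1 :> nat -> \rank (blk A i j) = p i.

Lemma rank_mul_tN_mxpow (N' : 'M[R]_n) : upper_blk 1 N' ->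
  super_colfull N /\ super_colfull N' \/ super_rowfull N /\ super_rowfull N' ->
  \rank (N *m mxprod 2 k.+2 tN) = \rank (mxpow N' k.+1).
Proof.
move=> N'_upper [[cN cN'] | [rN rN']].
- apply: (rank_mul_mxprod_mxpow (@colinj_blkM _ _ _) (@rank_eq_colinj_blk _ _ _)
    N_upper (colinj_blk1 cN) N'_upper (colinj_blk1 cN')) => s hs.
  split; first exact: upper_blk_tNs.
  by apply: colinj_blk1 => i j e; rewrite submxblock_tNs // cN.
- apply: (rank_mul_mxprod_mxpow (@rowinj_blkM _ _ _) (@rank_eq_rowinj_blk _ _ _)
    N_upper (rowinj_blk1 rN) N'_upper (rowinj_blk1 rN')) => s hs.
  split; first exact: upper_blk_tNs.
  by apply: rowinj_blk1 => i j e; rewrite submxblock_tNs // rN.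
Qed.

End Reduction.

Lemma SUTP (R : realType) (I : interval R) nu (p : 'I_nu -> nat)
    (F : R -> 'M[R]_(bsize p)) :
  SUT I F <-> forall t, t \in I -> upper_blk 1 (F t).
Proof.
split => hF t ht i j ij; apply: hF => //; lia.
Qed.

Lemma mxcont_tNs (R : realType) (I : interval R) nu (p : 'I_nu -> nat) k
    (N : R -> 'M[R]_(bsize p)) (M : nat -> nat -> R -> 'M[R]_(bsize p)) :
  mxcont I N -> (forall i j, (j < i <= k)%N -> mxcont I (M i j)) ->
  forall i s, (i <= k)%N -> mxcont I (fun t => tNs (N t) (fun i j => M i j t) i s).
Proof.
move=> cN cM; elim=> [|i IH] s le /=; first exact: mxcont_cst.
case: (s == i.+2); last by apply: IH; lia.
apply: mxcontM => //; apply: mxcont_sum => m; apply/mxcontX/mxcontN.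
apply: mxcontD; first by apply: cM; lia.
apply: mxcont_sum => j; apply/mxcontZ/mxcontM.
  by apply: cM; have := ltn_ord j; lia.
by apply: mxcont_prod => s'; apply: IH; lia.
Qed.

Unset Implicit Arguments.
Theorem mainTheorem18 (R : realType) (I : interval R) (nu : nat)
  (p : 'I_nu -> nat) (k : nat)
  (N : R -> 'M[R]_(bsize p)) (M : nat -> nat -> R -> 'M[R]_(bsize p)) :
  (2 <= nu)%N -> (forall i, (0 < p i)%N) -> (1 <= k)%N ->
  SUT I N -> mxcont I N ->
  (forall i j : nat, (j < i <= k)%N -> SUT I (M i j) /\ mxcont I (M i j)) ->
  let NN := fun t => bigNk k (N t) (fun i j => M i j t) in
  (exists Nt : nat -> R -> 'M[R]_(bsize p),
     (forall s, (2 <= s <= k.+1)%N ->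
        [/\ SUT I (Nt s), mxcont I (Nt s) &
            forall t, t \in I -> forall i j : 'I_nu, j = i.+1 :> nat ->
              submxblock (Nt s t) i j = submxblock (N t) i j]) /\
     let P := fun t => mxprod 2 k.+2 (fun s => Nt s t) in
     forall t, t \in I ->
       [/\ (forall y : 'cV[R]_(\sum_(i < k.+1) bsize p),
              NN t *m y = 0 <->
              (N t *m P t *m submxcol y ord_max = 0 /\
               forall i : 'I_k.+1, (i < k)%N ->
                 submxcol y i =
                 (-1) ^+ (k - i) *: (mxprod i.+2 k.+2 (fun s => Nt s t)
                                     *m submxcol y ord_max))),
           \rank (cokermx (NN t)) = \rank (cokermx (N t *m P t)) &
           \rank (NN t) = (k * bsize p + \rank (N t *m P t))%N]) /\
  (SUT_column I N \/ SUT_row I N ->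
     (forall t, t \in I -> \rank (NN t) = (k * bsize p + \rank (mxpow (N t) k.+1))%N)
     /\ exists r : nat, forall t, t \in I -> \rank (NN t) = r).
Proof.
move=> _ _ k_gt0 /SUTP N_upper cN hM NN.
have M_upper t : t \in I -> forall i j, (j < i <= k)%N -> upper_blk 1 (M i j t).
  by move=> ht i j ij; exact: (SUTP I (M i j)).1 (hM i j ij).1 t ht.
split.
  exists (fun s t => tNs (N t) (fun i j => M i j t) k s); split.
    move=> s hs; split.
    - apply/SUTP => t ht.
      exact: upper_blk_tNs (N_upper t ht) (M_upper t ht) _ s (leqnn k).
    - exact: mxcont_tNs cN (fun i j ij => (hM i j ij).2) k s (leqnn k).
    - move=> t ht i j ij.
      exact: submxblock_tNs (N_upper t ht) (M_upper t ht) _ _ _ _ (leqnn k) hs ij.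
  move=> P t ht; have [Nt_upper Mt_upper] := (N_upper t ht, M_upper t ht).
  split; first by move=> y; exact: bigNk_kerP Nt_upper Mt_upper k_gt0 y.
    by rewrite !mxrank_coker; exact: bigNk_corank Nt_upper Mt_upper k_gt0.
  exact: rank_bigNk Nt_upper Mt_upper k_gt0.
move=> NcolNrow.
have rkNN t t' : t \in I -> t' \in I ->
    \rank (NN t) = (k * bsize p + \rank (mxpow (N t') k.+1))%N.
  move=> ht ht'; rewrite (rank_bigNk (N_upper t ht) (M_upper t ht) k_gt0).
  congr (_ + _)%N.
  apply: rank_mul_tN_mxpow (N_upper t ht) (M_upper t ht) _ (N_upper t' ht') _.
  by case: NcolNrow => [[_ [_ sN]] | [_ [_ sN]]]; [left | right]; split; apply: sN.
split; first by move=> t ht; exact: rkNN.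
have [[t0 ht0] | noI] := pselect (exists t, t \in I).
  by exists (\rank (NN t0)) => t ht; rewrite (rkNN t t0) // (rkNN t0 t0).
by exists 0%N => t ht; case: noI; exists t.
Qed.
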